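(* Let $G$ be a linearly ordered abelian group, $F$ a field of characteristic $0$, $n\leq 3$, and let $\Gamma$ be an almost non-degenerate elementary $G$-grading on $M_n(F)$ whose neutral component is commutative. Then $\Gamma$ is equivalent to the canonical $\mathbb{Z}$-grading on $M_n(F)$.
   Context: A linearly ordered group is a group with a translation-invariant total order. The elementary grading on $M_n(F)$ induced by $(g_1,\dots,g_n)$ is $R_g=\mathrm{span}\{e_{pq}: g_q-g_p=g\}$; the canonical $\mathbb{Z}$-grading is the one induced by $(0,1,\dots,n-1)$. Two gradings are equivalent if there are an algebra isomorphism $\varphi$ and a bijection $\alpha$ between their supports with $\varphi(A_g)=B_{\alpha(g)}$ for all $g$ in the support. A graded monomial identity is trivial if it lies in the $T_G$-ideal generated by the variables whose degree is outside the support of the grading, and non-trivial otherwise; a grading is almost non-degenerate if it satisfies no non-trivial multilinear graded monomial identity. *)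

From HB Require Import structures.
From mathcomp Require Import all_boot all_order all_algebra.
Set Implicit Arguments. Unset Strict Implicit. Unset Printing Implicit Defensive.
Import GRing.Theory.
Local Open Scope ring_scope.

Definition lin_ordered_group (G : zmodType) (le : rel G) : Prop :=
  [/\ reflexive le, antisymmetric le, transitive le, total le &
      forall x y z : G, le x y -> le (x + z) (y + z)].

Section Elementary.
Variables (F : fieldType) (G : zmodType) (n : nat).

(* Homogeneous component R_h of the elementary grading induced by
   (g_1,...,g_n): R_h = span{ e_pq : g q - g p = h }, i.e. the matrices
   supported on the entries (p,q) with g q - g p = h. *)
Definition in_comp (g : 'I_n -> G) (h : G) (A : 'M[F]_n) : Prop :=
  forall p q : 'I_n, A p q != 0 -> g q - g p = h.

Definition gsupp (g : 'I_n -> G) : pred G :=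
  fun h => [exists p : 'I_n, exists q : 'I_n, g q - g p == h].

(* The multilinear graded monomial x_1^(h_1) ... x_m^(h_m) (m >= 1, distinct
   variables, degrees hs) is a graded identity of the grading. *)
Definition is_monomial_identity (g : 'I_n -> G) (hs : seq G) : Prop :=
  forall As : seq 'M[F]_n, size As = size hs ->
    (forall i, (i < size hs)%N -> in_comp g (nth 0 hs i) (nth 0 As i)) ->
    foldr mulmx 1%:M As = 0.

(* The monomial lies in the T_G-ideal generated by the variables of degree
   outside the support: some nonempty consecutive factor has degree outside
   the support. *)
Definition trivial_monomial (g : 'I_n -> G) (hs : seq G) : Prop :=
  exists i j : nat, [/\ (i < j)%N, (j <= size hs)%N &
    ~~ gsupp g (\sum_(h <- take (j - i) (drop i hs)) h)].

Definition almost_nondegenerate (g : 'I_n -> G) : Prop :=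
  forall hs : seq G, (0 < size hs)%N -> is_monomial_identity g hs ->
    trivial_monomial g hs.

Definition neutral_commutative (g : 'I_n -> G) : Prop :=
  forall A B : 'M[F]_n, in_comp g 0 A -> in_comp g 0 B -> A *m B = B *m A.

End Elementary.

Definition canon_deg (n : nat) : 'I_n -> int := fun i => (nat_of_ord i)%:Z.

Arguments canon_deg n i : clear implicits.

Definition alg_iso (F : fieldType) (n : nat) (phi : 'M[F]_n -> 'M[F]_n) : Prop :=
  [/\ bijective phi,
      forall (c : F) (A B : 'M[F]_n), phi (c *: A + B) = c *: phi A + phi B,
      forall A B : 'M[F]_n, phi (A *m B) = phi A *m phi B &
      phi 1%:M = 1%:M].

Definition graded_equiv (F : fieldType) (G H : zmodType) (n : nat)
    (g : 'I_n -> G) (k : 'I_n -> H) : Prop :=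
  exists (phi : 'M[F]_n -> 'M[F]_n) (alpha : G -> H),
    [/\ alg_iso phi,
        {in gsupp g, forall h, alpha h \in gsupp k},
        {in gsupp g &, injective alpha},
        (forall t, t \in gsupp k -> exists2 h, h \in gsupp g & alpha h = t) &
        {in gsupp g, forall h,
           (forall A, in_comp g h A -> in_comp k (alpha h) (phi A)) /\
           (forall B, in_comp k (alpha h) B ->
              exists2 A, in_comp g h A & phi A = B)}].

From HB Require Import structures.
From mathcomp Require Import all_boot all_order all_algebra fingroup perm.
Set Implicit Arguments. Unset Strict Implicit. Unset Printing Implicit Defensive.
Import GRing.Theory.
Local Open Scope ring_scope.

(* Conjugation by a permutation matrix turns the elementary grading given by g
   into the one given by g \o s, so the grading is equivalent to the canonical
   Z-grading as soon as, for some reordering s of the indices, the differences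
   g (s q) - g (s p) coincide exactly when the differences q - p do.  This is
   the case when g \o s is an arithmetic progression with nonzero step, because
   a linearly ordered group is torsion-free.  A commutative neutral component
   forces g to be injective (otherwise e_pq and e_qp are both neutral), so g
   can be sorted increasingly, and for n <= 2 the sorted sequence is a
   progression.  For n = 3 with consecutive steps x <> y, the degree y is
   carried only by the second consecutive pair and x only by the first, so the
   monomial of degrees y, x is a graded identity; it is non-trivial because
   y, x and y + x all lie in the support. *)

Lemma gsuppP (G : zmodType) n (g : 'I_n -> G) h :
  reflect (exists p q, g q - g p = h) (gsupp g h).
Proof.
apply: (iffP existsP) => [[p /existsP [q /eqP <-]]|[p [q <-]]]; first by exists p, q.
by exists p; apply/existsP; exists q.
Qed.

Lemma gsupp_diff (G : zmodType) n (g : 'I_n -> G) p q : gsupp g (g q - g p).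
Proof. by apply/gsuppP; exists p, q. Qed.

Section LinearlyOrderedGroup.
Variables (G : zmodType) (le : rel G).
Hypothesis leG : lin_ordered_group le.

Lemma le_subr_ge0 x y : le x y -> le 0 (y - x).
Proof. by case: leG => _ _ _ _ leD /(leD _ _ (- x)); rewrite subrr. Qed.

Lemma le_subr_le0 x y : le x y -> le (x - y) 0.
Proof. by case: leG => _ _ _ _ leD /(leD _ _ (- y)); rewrite subrr. Qed.

Lemma le_addr_ge0 x y : le 0 x -> le 0 y -> le 0 (x + y).
Proof.
case: leG => _ _ le_trans _ leD x_ge0 /(leD _ _ x); rewrite add0r addrC.
exact: le_trans.
Qed.

Lemma le_paddr_eq0 x y : le 0 x -> le 0 y -> x + y = 0 -> x = 0.
Proof.
case: leG => _ le_anti _ _ leD x_ge0 /(leD _ _ x); rewrite add0r addrC => + xy0.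
by rewrite xy0 => x_le0; apply: le_anti; rewrite x_le0.
Qed.

Lemma le_pmulrn_eq0 d k : le 0 d -> d *+ k.+1 = 0 -> d = 0.
Proof.
move=> d_ge0; have dk_ge0 i : le 0 (d *+ i).
  by case: leG => le_refl _ _ _ _; elim: i => [|i IHi]; rewrite ?mulrS ?le_addr_ge0.
by rewrite mulrS; apply: le_paddr_eq0.
Qed.

Lemma mulrz_eq0_ordered (d : G) (m : int) : d *~ m = 0 -> d = 0 \/ m = 0.
Proof.
wlog d_ge0 : d / le 0 d => [wlog_d|].
  case: leG => _ _ _ le_total _; case/orP: (le_total 0 d) => [/wlog_d//|/le_subr_ge0].
  rewrite add0r => /wlog_d wlog_Nd dm0.
  have /wlog_Nd [/eqP|] : (- d) *~ m = 0 by rewrite mulNrz dm0 oppr0.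
    by rewrite oppr_eq0 => /eqP; left.
  by right.
case: m => [[|k]|k] dm0; [by right|left..].
  exact: le_pmulrn_eq0 dm0.
move: dm0; rewrite NegzE mulrNz => /eqP; rewrite oppr_eq0 => /eqP.
exact: le_pmulrn_eq0.
Qed.

Lemma sort_perm n (g : 'I_n -> G) :
  exists s : 'S_n, {homo g \o s : i j / (i <= j)%N >-> le i j}.
Proof.
case: leG => le_refl _ le_trans le_total _.
pose r := [rel i j : 'I_n | le (g i) (g j)].
have r_trans : transitive r by move=> j i k; apply: le_trans.
have r_sorted : sorted r (sort r (enum 'I_n)).
  by apply: sort_sorted => i j; apply: le_total.
have /tuple_permP [s s_def] : perm_eq (sort r (enum 'I_n)) (ord_tuple n).
  by rewrite perm_sort val_ord_tuple.
exists s => i j ij; have := sorted_leq_nth r_trans (fun i => le_refl _) i r_sorted.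
rewrite s_def /= => /(_ i j); rewrite !inE size_map size_enum_ord !ltn_ord.
move=> /(_ isT isT ij).
by rewrite !(nth_map i) -?enumT ?size_enum_ord // !nth_ord_enum !tnth_ord_tuple.
Qed.

Lemma ltn_homo_diff n (a : 'I_n -> G) p k :
  {homo a : i j / (i <= j)%N >-> le i j} ->
  le 0 (a k - a p) -> a k - a p != 0 -> (p < k)%N.
Proof.
case: leG => _ le_anti _ _ _ a_homo diff_ge0; rewrite ltnNge; apply: contra.
by move=> /a_homo /le_subr_le0 diff_le0; apply/eqP/le_anti; rewrite diff_le0.
Qed.

End LinearlyOrderedGroup.

Section ElementaryGrading.
Variables (F : fieldType) (n : nat).

Lemma neutral_commutative_inj (G : zmodType) (g : 'I_n -> G) :
  neutral_commutative F g -> injective g.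
Proof.
move=> g_comm p q gpq; apply/eqP; apply: contraT => p_neq_q.
have e_neutral a b : g a = g b -> in_comp g 0 (delta_mx a b : 'M[F]_n).
  move=> gab i j; rewrite mxE.
  by have [->|_] := eqVneq i a; have [->|_] := eqVneq j b;
    rewrite ?gab ?subrr ?eqxx.
have := g_comm _ _ (e_neutral p q gpq) (e_neutral q p (esym gpq)).
rewrite !mul_delta_mx => /matrixP /(_ p p); rewrite !mxE !eqxx (negbTE p_neq_q).
by move/eqP; rewrite oner_eq0.
Qed.

Lemma mulmx_in_comp_eq0 (G : zmodType) (g : 'I_n -> G) h1 h2 (A B : 'M[F]_n) :
  in_comp g h1 A -> in_comp g h2 B ->
  (forall p k j, g k - g p = h1 -> g j - g k <> h2) -> A *m B = 0.
Proof.
move=> A_h1 B_h2 no_path; apply/matrixP => p j; rewrite !mxE; apply: big1 => k _.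
have [Apk0|/A_h1 Ek] := eqVneq (A p k) 0; first by rewrite Apk0 mul0r.
have [Bkj0|/B_h2 Ej] := eqVneq (B k j) 0; first by rewrite Bkj0 mulr0.
by case: (no_path p k j Ek Ej).
Qed.

Lemma monomial_identity2 (G : zmodType) (g : 'I_n -> G) h1 h2 :
  (forall p k j, g k - g p = h1 -> g j - g k <> h2) ->
  is_monomial_identity F g [:: h1; h2].
Proof.
move=> no_path [|A [|B [|]]] // _ comp_AB /=.
by rewrite mulmx1; apply: (mulmx_in_comp_eq0 (comp_AB 0%N _) (comp_AB 1%N _)).
Qed.

Lemma mxsub_permK (s : 'S_n) (A : 'M[F]_n) :
  mxsub s^-1%g s^-1%g (mxsub s s A) = A.
Proof. by apply/matrixP => i j; rewrite !mxE !permKV. Qed.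

Lemma mxsub_permKV (s : 'S_n) (A : 'M[F]_n) :
  mxsub s s (mxsub s^-1%g s^-1%g A) = A.
Proof. by apply/matrixP => i j; rewrite !mxE !permK. Qed.

Lemma alg_iso_mxsub (s : 'S_n) : alg_iso (@mxsub F n n n n s s).
Proof.
split.
- by exists (mxsub s^-1%g s^-1%g) => A; rewrite (mxsub_permK, mxsub_permKV).
- by move=> c A B; apply/matrixP => i j; rewrite !mxE.
- move=> A B; apply/matrixP => i j; rewrite !mxE (reindex_inj (@perm_inj _ s)).
  by apply: eq_bigr => k _; rewrite !mxE.
- by apply/matrixP => i j; rewrite !mxE (inj_eq perm_inj).
Qed.

Lemma in_comp_mxsub (G : zmodType) (g : 'I_n -> G) (s : 'S_n) h (A : 'M[F]_n) :
  in_comp g h A <-> in_comp (g \o s) h (mxsub s s A).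
Proof.
split=> [A_h i j|sA_h i j Aij]; first by rewrite mxE => /A_h.
by have := sA_h (s^-1 i)%g (s^-1 j)%g; rewrite mxE /= !permKV; apply.
Qed.

Definition same_differences (G H : zmodType) (u : 'I_n -> G) (v : 'I_n -> H) :=
  forall p q p' q', u q - u p = u q' - u p' <-> v q - v p = v q' - v p'.

Lemma in_comp_same_differences (G H : zmodType) (u : 'I_n -> G) (v : 'I_n -> H) :
  same_differences u v ->
  forall p q (A : 'M[F]_n), in_comp u (u q - u p) A <-> in_comp v (v q - v p) A.
Proof. by move=> uv p q A; split=> A_comp i j /A_comp /uv. Qed.

Lemma graded_equiv_perm (G H : zmodType) (g : 'I_n -> G) (k : 'I_n -> H) (s : 'S_n) :
  same_differences (g \o s) k -> graded_equiv F g k.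
Proof.
set u := g \o s => uk.
pose alpha h := if [pick pq | u pq.2 - u pq.1 == h] is Some pq then k pq.2 - k pq.1 else 0.
have alphaE p q : alpha (u q - u p) = k q - k p.
  rewrite /alpha; case: pickP => [[p' q'] /eqP /uk //|/(_ (p, q))].
  by rewrite eqxx.
have gsupp_u h : gsupp g h -> exists p q, h = u q - u p.
  by move=> /gsuppP [p [q <-]]; exists (s^-1 p)%g, (s^-1 q)%g; rewrite /u /= !permKV.
exists (mxsub s s), alpha; split.
- exact: alg_iso_mxsub.
- by move=> _ /gsupp_u [p [q ->]]; rewrite alphaE; apply: gsupp_diff.
- by move=> _ _ /gsupp_u [p [q ->]] /gsupp_u [p' [q' ->]]; rewrite !alphaE => /uk.
- move=> _ /gsuppP [p [q <-]]; exists (u q - u p); first exact: gsupp_diff.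
  exact: alphaE.
- move=> _ /gsupp_u [p [q ->]]; rewrite alphaE; split.
    by move=> A /(in_comp_mxsub g s) /(in_comp_same_differences uk).
  move=> B /(in_comp_same_differences uk) B_comp.
  exists (mxsub s^-1%g s^-1%g B); last exact: mxsub_permKV.
  by apply/(in_comp_mxsub g s); rewrite mxsub_permKV.
Qed.

End ElementaryGrading.

Lemma same_differences_small n (G H : zmodType) (u : 'I_n -> G) (v : 'I_n -> H) :
  (n <= 1)%N -> same_differences u v.
Proof.
move=> n_le1; have ord_eq (i j : 'I_n) : i = j.
  apply/val_inj => /=; move: (leq_trans (ltn_ord i) n_le1) (leq_trans (ltn_ord j) n_le1).
  by rewrite !ltnS !leqn0 => /eqP -> /eqP ->.
by move=> p q p' q'; rewrite (ord_eq q p) (ord_eq q' p') (ord_eq p' p).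
Qed.

Lemma same_differences_progression (G : zmodType) (le : rel G) n (u : 'I_n -> G) a d :
  lin_ordered_group le -> d != 0 -> (forall i, u i = a + d *~ i) ->
  same_differences u (canon_deg n).
Proof.
move=> leG d_neq0 uE; have diffE i j : u j - u i = d *~ (j%:Z - i%:Z).
  by rewrite !uE (addrC a) addrKA mulrzBr.
move=> p q p' q'; rewrite !diffE /canon_deg.
split=> [E|->//]; have : d *~ ((q%:Z - p%:Z) - (q'%:Z - p'%:Z)) = 0.
  by rewrite mulrzBr E subrr.
case/(mulrz_eq0_ordered leG) => [d_eq0|/eqP]; first by rewrite d_eq0 eqxx in d_neq0.
by rewrite subr_eq0 => /eqP.
Qed.

Lemma ord2P (i : 'I_2) : i = 0 \/ i = 1.
Proof. by case: i => [[|[|//]] ?]; [left|right]; apply: val_inj. Qed.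

Lemma ord3P (i : 'I_3) : [\/ i = 0, i = 1 | i = 2].
Proof.
by case: i => [[|[|[|//]]] ?]; [constructor 1|constructor 2|constructor 3]; apply: val_inj.
Qed.

Lemma ord2_progression (G : zmodType) (u : 'I_2 -> G) i : u i = u 0 + (u 1 - u 0) *~ i.
Proof. by case: (ord2P i) => ->; [rewrite mulr0z addr0 | rewrite mulr1z addrC subrK]. Qed.

Lemma ord3_progression (G : zmodType) (u : 'I_3 -> G) :
  u 1 - u 0 = u 2 - u 1 -> forall i, u i = u 0 + (u 1 - u 0) *~ i.
Proof.
move=> steps i; case: (ord3P i) => ->.
- by rewrite mulr0z addr0.
- by rewrite mulr1z addrC subrK.
- by rewrite -[_ *~ _]/((u 1 - u 0) *+ 2) (mulr2n (u 1 - u 0)) {2}steps addrA !subrKC.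
Qed.

Lemma almost_nondegenerate3_steps (G : zmodType) (le : rel G) (F : fieldType)
    (g : 'I_3 -> G) (s : 'S_3) :
  lin_ordered_group le -> injective g ->
  {homo g \o s : i j / (i <= j)%N >-> le i j} -> almost_nondegenerate F g ->
  g (s 1) - g (s 0) = g (s 2) - g (s 1).
Proof.
move=> leG g_inj gs_homo nondeg; have gs_inj : injective (g \o s) := inj_comp g_inj perm_inj.
apply/eqP; apply: contraT => steps_neq.
have diff_neq0 (i j : 'I_3) : i != j -> g (s j) - g (s i) != 0.
  by rewrite subr_eq0 (inj_eq gs_inj) eq_sym.
have ltn_pos_diff (p k i j : 'I_3) : (i <= j)%N -> i != j ->
    g (s k) - g (s p) = g (s j) - g (s i) -> (p < k)%N.
  move=> ij i_neq_j E; apply: (ltn_homo_diff leG gs_homo); rewrite /= E ?diff_neq0 //.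
  exact/le_subr_ge0/gs_homo.
have second_step_end p k : g (s k) - g (s p) = g (s 2) - g (s 1) -> k = 2.
  move=> E; have := ltn_pos_diff p k 1 2 isT isT E.
  by case: (ord3P p) (ord3P k) E => -> [] -> //= E _; rewrite E eqxx in steps_neq.
have first_step_start p k : g (s k) - g (s p) = g (s 1) - g (s 0) -> p = 0.
  move=> E; have := ltn_pos_diff p k 0 1 isT isT E.
  by case: (ord3P p) (ord3P k) E => -> [] -> //= E _; rewrite E eqxx in steps_neq.
have identity : is_monomial_identity F g [:: g (s 2) - g (s 1); g (s 1) - g (s 0)].
  apply: monomial_identity2 => p k j.
  rewrite -[p](permKV s) -[k](permKV s) -[j](permKV s).
  by move=> /second_step_end -> /first_step_start /(congr1 val).
have [i [j [ij j_le2]]] := nondeg [:: _; _] isT identity.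
case: i j ij j_le2 => [|[|i]] [|[|[|j]]] //= _ _; rewrite ?big_cons ?big_nil ?addr0.
- by rewrite gsupp_diff.
- by rewrite addrA subrK gsupp_diff.
- by rewrite gsupp_diff.
Qed.

Theorem mainTheorem9 (G : zmodType) (le : rel G) (F : fieldType) (n : nat)
    (g : 'I_n -> G) :
  lin_ordered_group le ->
  [pchar F] =i pred0 ->
  (n <= 3)%N ->
  almost_nondegenerate F g ->
  neutral_commutative F g ->
  graded_equiv F g (canon_deg n).
Proof.
move=> leG _ n_le3 nondeg /neutral_commutative_inj g_inj.
have [s s_homo] := sort_perm leG g; apply: (graded_equiv_perm F (s := s) _).
have step_neq0 (i j : 'I_n) : i != j -> g (s j) - g (s i) != 0.
  by rewrite subr_eq0 (inj_eq g_inj) (inj_eq perm_inj) eq_sym.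
case: n => [|[|[|[|//]]]] in g s nondeg g_inj n_le3 s_homo step_neq0 *;
  try exact: same_differences_small.
- exact: (same_differences_progression leG (step_neq0 0 1 isT) (ord2_progression _)).
- apply: (same_differences_progression leG (step_neq0 0 1 isT)).
  exact/ord3_progression/(almost_nondegenerate3_steps leG g_inj s_homo nondeg).
Qed.
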